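(* Let $m\ge1$ and let $\Sigma$ be an alphabet with $|\Sigma|=m$. If $m\le 2$, then for every antimorphic involution $\theta$ on $\Sigma^*$ there is no infinite word over $\Sigma$ that is pseudo-cube-free with respect to $\theta$. If $m\ge 3$, then for every antimorphic involution $\theta$ on $\Sigma^*$ there exists an infinite word over $\Sigma$ that is pseudo-cube-free with respect to $\theta$.
   Context: A function $\theta:\Sigma^*\to\Sigma^*$ is an antimorphic involution if $\theta(uv)=\theta(v)\theta(u)$ and $\theta(\theta(w))=w$ for all words $u,v,w$. For an integer $k\ge 2$, a nonempty word $w$ is a pseudo $k$th power with respect to $\theta$ if $w=u_1u_2\cdots u_k$ where for all $1\le i,j\le k$, either $u_i=u_j$ or $u_i=\theta(u_j)$. A pseudo cube is a pseudo $3$rd power. A (finite or infinite) word is pseudo-cube-free with respect to $\theta$ if none of its factors (contiguous subwords) is a pseudo cube with respect to $\theta$. *)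

From mathcomp Require Import all_boot.
Set Implicit Arguments. Unset Strict Implicit. Unset Printing Implicit Defensive.

Definition antimorphic_involution (Sigma : Type) (theta : seq Sigma -> seq Sigma) : Prop :=
  (forall u v, theta (u ++ v) = theta v ++ theta u) /\
  (forall w, theta (theta w) = w).

Definition pseudo_power (Sigma : eqType) (theta : seq Sigma -> seq Sigma)
    (k : nat) (w : seq Sigma) : Prop :=
  w != [::] /\
  exists us : seq (seq Sigma),
    size us = k /\ flatten us = w /\
    (forall i j, i < k -> j < k ->
       nth [::] us i = nth [::] us j \/ nth [::] us i = theta (nth [::] us j)).

Definition pseudo_cube (Sigma : eqType) (theta : seq Sigma -> seq Sigma) (w : seq Sigma) : Prop :=
  pseudo_power theta 3 w.

Definition factor (Sigma : Type) (f : nat -> Sigma) (i n : nat) : seq Sigma :=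
  mkseq (fun j => f (i + j)) n.

Definition pseudo_cube_free_inf (Sigma : eqType) (theta : seq Sigma -> seq Sigma)
    (f : nat -> Sigma) : Prop :=
  forall i n, ~ pseudo_cube theta (factor f i n).

(* Over at most two letters, either the involution swaps the two letters, and then
   any three letters form a pseudo cube, or it fixes every letter, so that it is the
   reversal and a finite search shows that every binary word of length 10 contains
   a pseudo cube with respect to reversal.
   Over at least three letters, if the involution moves some letter a, choose c
   distinct from a and its image: no nonempty word over {a, c} has its image over
   {a, c} unless it is a power of a fixed letter c, so pseudo cubes over {a, c} are
   ordinary cubes, and the Thue-Morse word written with a and c is even
   overlap-free. If the involution fixes every letter, it is the reversal, and a
   pseudo cube u u' u'' yields either a square or two equal adjacent letters; a
   square-free ternary word, obtained from the Thue-Morse word by recording its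
   changes, avoids both. *)

From mathcomp Require Import all_boot zify.
Set Implicit Arguments. Unset Strict Implicit. Unset Printing Implicit Defensive.

Definition square_free (T : Type) (f : nat -> T) :=
  forall i p, 0 < p -> ~ (forall k, k < p -> f (i + k) = f (i + p + k)).

Definition overlap_free (T : Type) (f : nat -> T) :=
  forall i p, 0 < p -> ~ (forall k, k <= p -> f (i + k) = f (i + p + k)).

Section Factors.
Variable T : Type.
Implicit Types (f : nat -> T) (u v : seq T).

Lemma nth_factor d f i n k : k < n -> nth d (factor f i n) k = f (i + k).
Proof. exact: nth_mkseq. Qed.

Lemma take_factor f i n m : m <= n -> take m (factor f i n) = factor f i m.
Proof. by move=> le_mn; rewrite /factor /mkseq -map_take take_iota (minn_idPl _). Qed.

Lemma drop_factor f i n m : drop m (factor f i n) = factor f (i + m) (n - m).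
Proof.
rewrite /factor /mkseq -map_drop drop_iota -[m in iota m]addn0 iotaDl -map_comp.
by apply: eq_map => k /=; rewrite addnA.
Qed.

Lemma factor_catE f i n u v : factor f i n = u ++ v ->
  u = factor f i (size u) /\ v = factor f (i + size u) (size v).
Proof.
move=> E; have Hn : n = size u + size v by rewrite -size_cat -E size_mkseq.
split.
  by move: (congr1 (take (size u)) E); rewrite take_size_cat // take_factor ?Hn ?leq_addr.
by move: (congr1 (drop (size u)) E); rewrite drop_size_cat // drop_factor Hn addKn.
Qed.

Lemma factor_comp (S : Type) (g : T -> S) f i n :
  factor (g \o f) i n = map g (factor f i n).
Proof. by rewrite /factor /mkseq -map_comp. Qed.

Lemma factor_square f i n u v : factor f i n = u ++ u ++ v ->
  forall k, k < size u -> f (i + k) = f (i + size u + k).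
Proof.
case/factor_catE=> Eu /esym/factor_catE [Eu' _] k lt_k.
by rewrite -(nth_factor (f 0) _ _ lt_k) -Eu {1}Eu' nth_factor.
Qed.

Lemma factor_cube f i n u : 0 < size u -> factor f i n = u ++ u ++ u ->
  forall k, k <= size u -> f (i + k) = f (i + size u + k).
Proof.
move=> u0 E k; rewrite leq_eqVlt => /predU1P [->|]; last exact: factor_square E k.
have /factor_catE [_ /esym E'] := E; rewrite -[u ++ u]cats0 -catA in E'.
by have := factor_square E' u0; rewrite !addn0.
Qed.

Lemma square_free_neq f i : square_free f -> f i <> f i.+1.
Proof. by move=> sqf E; apply: (sqf i 1) => // -[|] // _; rewrite !addn0 addn1. Qed.

Lemma square_free_comp (S : Type) (g : T -> S) f :
  injective g -> square_free f -> square_free (g \o f).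
Proof. by move=> g_inj sqf i p p0 sq; apply: (sqf i p p0) => k /sq /g_inj. Qed.

Lemma overlap_free_comp (S : Type) (g : T -> S) f :
  injective g -> overlap_free f -> overlap_free (g \o f).
Proof. by move=> g_inj ovf i p p0 ov; apply: (ovf i p p0) => k /ov /g_inj. Qed.

End Factors.

(* [thue_morse n] is the parity of the binary digit sum of [n]; the first argument of
   [thue_morse_rec] is fuel, and [n] halvings always suffice. *)
Fixpoint thue_morse_rec (fuel n : nat) : bool :=
  if fuel is fuel'.+1 then (if n is 0 then false else odd n (+) thue_morse_rec fuel' n./2)
  else false.

Definition thue_morse n := thue_morse_rec n n.

Lemma thue_morse_rec_fuel k k' n : n <= k -> n <= k' ->
  thue_morse_rec k n = thue_morse_rec k' n.
Proof.
elim: k k' n => [|k IH] [|k'] [|n] //= le_nk le_nk'.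
by congr (_ (+) _); apply: IH; lia.
Qed.

Lemma thue_morse_half n : thue_morse n = odd n (+) thue_morse n./2.
Proof.
case: n => [|n] //; rewrite /thue_morse /=.
by congr (_ (+) _); apply: thue_morse_rec_fuel; lia.
Qed.

Lemma thue_morse_double (b : bool) m : thue_morse (b + m.*2) = b (+) thue_morse m.
Proof. by rewrite thue_morse_half half_bit_double; congr (_ (+) _); lia. Qed.

Lemma thue_morse_pair n : ~~ odd n -> thue_morse n.+1 = ~~ thue_morse n.
Proof.
move=> even_n; have En : n = false + n./2.*2 by lia.
have ESn : n.+1 = true + n./2.*2 by lia.
by rewrite ESn {2}En !thue_morse_double.
Qed.

(* An odd period makes the word alternate along the whole overlap, since each shift
   by p exchanges the parities of positions; an even period halves. *)
Lemma thue_morse_overlap_free : overlap_free thue_morse.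
Proof.
move=> + p; elim/ltn_ind: p => p IH i p0 ov.
case: (boolP (odd p)) => [odd_p|even_p].
- have alt n : i <= n < i + p -> thue_morse n.+1 = ~~ thue_morse n.
    case/andP=> le_in lt_n; case: (boolP (odd n)) => [odd_n|]; last exact: thue_morse_pair.
    have -> : n = i + (n - i) by lia.
    rewrite -addnS (ov (n - i).+1) ?(ov (n - i)); try lia.
    by rewrite addnS thue_morse_pair //; apply/negP; lia.
  have shift k : k <= p -> thue_morse (i + k) = odd k (+) thue_morse i.
    elim: k => [|k IHk] le_kp; first by rewrite addn0.
    by rewrite addnS alt ?IHk; [rewrite -addNb | lia | lia].
  by move: (ov 0 (leq0n _)); rewrite !addn0 shift // odd_p; case: (thue_morse i).
- apply: (IH p./2 _ i./2); [lia | lia |] => j le_jp.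
  move: (ov j.*2 (ltac:(lia))).
  rewrite (_ : i + j.*2 = odd i + (i./2 + j).*2); last lia.
  rewrite (_ : i + p + j.*2 = odd i + (i./2 + p./2 + j).*2); last lia.
  by rewrite !thue_morse_double => /addbI.
Qed.

Definition thue_morse_change n : option bool :=
  if thue_morse n == thue_morse n.+1 then None else Some (thue_morse n).

(* Two stretches with the same changes that start equal stay equal, giving an overlap
   of the Thue-Morse word; if they start different, both must be constant, so the
   first one ends where the second starts, with the letter it started with. *)
Lemma thue_morse_change_square_free : square_free thue_morse_change.
Proof.
move=> i p p0 sq; rewrite /thue_morse_change in sq.
have agree_step k : k < p -> thue_morse (i + k) = thue_morse (i + p + k) ->
    thue_morse (i + k).+1 = thue_morse (i + p + k).+1.
  by move/sq; case: (thue_morse _) (thue_morse _) (thue_morse _) (thue_morse _)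
    => [] [] [] [].
have disagree_step k : k < p -> thue_morse (i + k) != thue_morse (i + p + k) ->
    thue_morse (i + k).+1 = thue_morse (i + k) /\
    thue_morse (i + p + k).+1 = thue_morse (i + p + k).
  by move/sq; case: (thue_morse _) (thue_morse _) (thue_morse _) (thue_morse _)
    => [] [] [] [].
case: (eqVneq (thue_morse i) (thue_morse (i + p))) => E.
- apply: (thue_morse_overlap_free p0 (i := i)); elim=> [|k IHk] le_kp.
    by rewrite !addn0.
  by rewrite !addnS agree_step // IHk // ltnW.
- have const k : k <= p ->
      thue_morse (i + k) != thue_morse (i + p + k) /\ thue_morse (i + k) = thue_morse i.
    elim: k => [|k IHk] le_kp; first by rewrite !addn0.
    have [ne eq_i] := IHk (ltnW le_kp); have [E1 E2] := disagree_step k le_kp ne.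
    by rewrite !addnS E1 E2.
  by have [_] := const p (leqnn p); move/eqP; rewrite eq_sym (negbTE E).
Qed.

Section AntimorphicInvolution.
Variables (T : eqType) (theta : seq T -> seq T).
Hypothesis theta_inv : antimorphic_involution theta.

Definition theta_letter (x : T) := head x (theta [:: x]).

Lemma theta_nil : theta [::] = [::].
Proof.
case: theta_inv => theta_cat _; have := congr1 size (theta_cat [::] [::]).
by rewrite size_cat; case: (theta [::]) => //= a s; lia.
Qed.

Lemma theta_cons x s : theta (x :: s) = theta s ++ theta [:: x].
Proof. by case: theta_inv => theta_cat _; rewrite -theta_cat. Qed.

Lemma size_theta_leq s : size s <= size (theta s).
Proof.
elim: s => //= x s IH; rewrite theta_cons size_cat.
case: theta_inv => _ thetaK; case E: (theta [:: x]) => [|a l]; last by rewrite /=; lia.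
by move: (thetaK [:: x]); rewrite E theta_nil.
Qed.

Lemma theta_letterE x : theta [:: x] = [:: theta_letter x].
Proof.
case: theta_inv => _ thetaK.
move: (size_theta_leq (theta [:: x])) (size_theta_leq [:: x]); rewrite thetaK.
by rewrite /theta_letter; case: (theta [:: x]) => [|a [|b s]].
Qed.

Lemma thetaE s : theta s = rev (map theta_letter s).
Proof.
elim: s => [|x s IH]; first by rewrite theta_nil.
by rewrite theta_cons IH theta_letterE /= rev_cons cats1.
Qed.

Lemma theta_letterK : involutive theta_letter.
Proof.
by case: theta_inv => _ thetaK x; move: (thetaK [:: x]); rewrite !theta_letterE => -[].
Qed.

Lemma size_theta s : size (theta s) = size s.
Proof. by rewrite thetaE size_rev size_map. Qed.

Lemma theta_rev : (forall x, theta_letter x = x) -> forall s, theta s = rev s.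
Proof. by move=> fixed s; rewrite thetaE map_id_in // => x _; apply: fixed. Qed.

(* Only the letter c, which must then be fixed, can occur in such a word. *)
Lemma theta_fixed_two_letters a c :
    theta_letter a != a -> c != a -> c != theta_letter a ->
  forall v, all (mem [:: a; c]) v -> all (mem [:: a; c]) (theta v) -> theta v = v.
Proof.
move=> moved_a ca c_theta_a v /allP v_ac /allP theta_v_ac.
have letter_c x : x \in v -> x = c /\ theta_letter x = x.
  move=> xv; have : theta_letter x \in [:: a; c].
    by apply: theta_v_ac; rewrite thetaE mem_rev map_f.
  move: (v_ac x xv); rewrite !inE => /orP [/eqP ->|/eqP ->].
    by rewrite (negbTE moved_a) eq_sym (negbTE c_theta_a).
  case/orP=> /eqP E //.
  by move: c_theta_a; rewrite -E theta_letterK eqxx.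
have /all_pred1P v_c : all (pred1 c) v by apply/allP => x /letter_c [-> _] /=.
rewrite thetaE map_id_in; last by move=> x /letter_c [].
by rewrite v_c rev_nseq.
Qed.

End AntimorphicInvolution.

Section PseudoCubes.
Variables (T : eqType) (theta : seq T -> seq T).

Lemma pseudo_cubeP w : (forall s, size (theta s) = size s) -> pseudo_cube theta w ->
  exists u0 u1 u2, [/\ w = u0 ++ u1 ++ u2, 0 < size u0,
    u0 = u1 \/ u0 = theta u1 & u1 = u2 \/ u1 = theta u2].
Proof.
move=> size_theta [w_ne [[|u0 [|u1 [|u2 [|? ?]]]] [//= _ [/= Ew rel]]]].
have same_size j : j < 3 -> size (nth [::] [:: u0; u1; u2] j) = size u0.
  by move=> lt_j3; case: (rel j 0 lt_j3 erefl) => ->; rewrite ?size_theta.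
exists u0, u1, u2; split; [by rewrite -Ew cats0 | | exact: (rel 0 1) | exact: (rel 1 2)].
rewrite lt0n; apply: contra w_ne => /eqP u00.
by rewrite -Ew cats0 -!size_eq0 !size_cat (same_size 1) // (same_size 2) // u00.
Qed.

Lemma pseudo_cube_letters w : size w = 3 ->
  (forall x y, x = y \/ x = theta_letter theta y) ->
  antimorphic_involution theta -> pseudo_cube theta w.
Proof.
case: w => [|x [|y [|z []]]] // _ letters theta_inv; split=> //.
exists [:: [:: x]; [:: y]; [:: z]]; do 2!split=> //.
have rel (a b : T) : [:: a] = [:: b] \/ [:: a] = theta [:: b].
  by rewrite theta_letterE //; case: (letters a b) => ->; [left|right].
by move=> [|[|[|]]] [|[|[|]]] // _ _; apply: rel.
Qed.

(* A sufficient test for pseudo cubes with respect to reversal; the condition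
   [flatten us == w] says that 3 divides [size w]. *)
Definition rev_cubeb (w : seq T) : bool :=
  let us := reshape (nseq 3 (size w %/ 3)) w in
  [&& w != [::], flatten us == w &
      all (fun u => all (fun v => (u == v) || (u == rev v)) us) us].

Lemma rev_cubeb_pseudo_cube w : (forall s, theta s = rev s) ->
  rev_cubeb w -> pseudo_cube theta w.
Proof.
move=> theta_rev /and3P [w_ne /eqP flat /allP rel]; split=> //.
set us := reshape _ w in flat rel; exists us; split; first by rewrite size_reshape.
split=> // i j lt_i lt_j; rewrite theta_rev.
have size_us : size us = 3 by rewrite size_reshape.
have ui : nth [::] us i \in us by rewrite mem_nth ?size_us.
have uj : nth [::] us j \in us by rewrite mem_nth ?size_us.
by move: (allP (rel _ ui) _ uj) => /orP [] /eqP; [left|right].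
Qed.

End PseudoCubes.

Lemma rev_cubeb_map (T S : eqType) (g : T -> S) w :
  rev_cubeb w -> rev_cubeb (map g w).
Proof.
case/and3P=> w_ne /eqP flat /allP rel; rewrite /rev_cubeb size_map -map_reshape.
rewrite -map_flatten flat eqxx andTb; apply/andP; split; first by case: (w) w_ne.
apply/allP=> _ /mapP [u u_in ->]; apply/allP=> _ /mapP [v v_in ->].
by case/orP: (allP (rel u u_in) v v_in) => /eqP ->; rewrite ?map_rev eqxx ?orbT.
Qed.

Fixpoint bool_words n : seq (seq bool) :=
  if n is n'.+1 then [seq b :: w | b <- [:: true; false], w <- bool_words n']
  else [:: [::]].

Lemma mem_bool_words w : w \in bool_words (size w).
Proof.
elim: w => // b w IH.
by apply: (allpairs_f (fun b w => b :: w)); first case: b.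
Qed.

Lemma binary_word_rev_cube (w : seq bool) : size w = 10 ->
  exists i n, i + n <= 10 /\ rev_cubeb (take n (drop i w)).
Proof.
have all_words : all (fun w => has (fun i => has (fun n =>
    (i + n <= 10) && rev_cubeb (take n (drop i w))) (iota 0 11)) (iota 0 11))
    (bool_words 10) by vm_compute.
move=> size_w; have := allP all_words w; rewrite -size_w => /(_ (mem_bool_words w)).
by case/hasP=> i _ /hasP [n _ /andP [le_in cube]]; exists i, n.
Qed.

Lemma two_letters (T : finType) (x : T) : #|T| <= 2 -> exists y, forall z, z = x \/ z = y.
Proof.
move=> card_T; case: (pickP (predC1 x)) => [y /= yx|only_x]; last first.
  by exists x => z; left; move: (only_x z) => /= /negbFE /eqP.
exists y => z; case: (eqVneq z x) => [|zx]; [left|right] => //.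
apply/eqP; apply: contraTT card_T => zy; rewrite -ltnNge; apply/card_gt2P.
by exists x, y, z; rewrite (eq_sym x) yx (eq_sym y) zy zx.
Qed.

Lemma third_letter (T : finType) (a b : T) : 2 < #|T| -> exists c, c != a /\ c != b.
Proof.
move=> card_T; have /existsP [c /andP [ca cb]] : [exists c, (c != a) && (c != b)].
  apply: contraTT card_T => /existsPn others; rewrite -leqNgt -cardsT.
  apply: leq_trans (subset_leq_card (_ : [set: T] \subset [set a; b])) _.
    by apply/subsetP => c _; move: (others c); rewrite !inE negb_and !negbK orbC.
  by rewrite cards2; case: (a != b).
by exists c.
Qed.

Lemma card_leq_injective (A B : finType) : #|A| <= #|B| -> exists g : A -> B, injective g.
Proof.
move=> le_AB; exists (fun x => enum_val (widen_ord le_AB (enum_rank x))).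
by move=> x y /enum_val_inj /(congr1 val) /= /val_inj /enum_rank_inj.
Qed.

Lemma overlap_free_pseudo_cube_free (T : eqType) theta (f : nat -> T) (P : pred T) :
    antimorphic_involution theta -> overlap_free f -> (forall n, P (f n)) ->
    (forall v, all P v -> all P (theta v) -> theta v = v) ->
  pseudo_cube_free_inf theta f.
Proof.
move=> theta_inv ovf f_P fixed i n /(pseudo_cubeP (size_theta theta_inv)).
case=> u0 [u1 [u2 [E u00 rel01 rel12]]].
have : all P (factor f i n) by apply/allP => _ /mapP [k _ ->].
rewrite E !all_cat => /and3P [P0 P1 P2].
have E01 : u0 = u1 by case: rel01 => // E'; rewrite E' fixed // -E'.
have E12 : u1 = u2 by case: rel12 => // E'; rewrite E' fixed // -E'.
subst u1 u2; apply: (ovf i (size u0) u00); exact: factor_cube E.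
Qed.

Lemma square_free_pseudo_cube_free (T : eqType) theta (f : nat -> T) :
  (forall s, theta s = rev s) -> square_free f -> pseudo_cube_free_inf theta f.
Proof.
move=> theta_rev sqf i n.
have size_theta s : size (theta s) = size s by rewrite theta_rev size_rev.
case/(pseudo_cubeP size_theta) => u0 [u1 [u2 [E u00 + _]]].
rewrite theta_rev => -[E01|/(canLR revK) E10].
  by subst u1; exact: sqf u00 (factor_square E).
have [Eu0 Erest] := factor_catE E.
apply: (square_free_neq (i := i + (size u0).-1) sqf).
have lt_last : (size u0).-1 < size u0 by lia.
have lt_first : 0 < size (u1 ++ u2) by rewrite size_cat -E10 size_rev; lia.
rewrite (_ : (i + (size u0).-1).+1 = i + size u0 + 0); last lia.
rewrite -(nth_factor (f 0) f (i + size u0) lt_first) -Erest.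
rewrite -(nth_factor (f 0) f i lt_last) -Eu0.
by rewrite nth_cat -E10 size_rev u00 nth_rev // subn1.
Qed.

Lemma binary_not_pseudo_cube_free (T : finType) theta (f : nat -> T) :
  #|T| <= 2 -> antimorphic_involution theta -> ~ pseudo_cube_free_inf theta f.
Proof.
move=> card_T theta_inv free; set x := f 0; have [y xy] := two_letters x card_T.
have thK := theta_letterK theta_inv.
case: (eqVneq (theta_letter theta x) x) => [fixed_x|moved_x]; last first.
  have x_y : theta_letter theta x = y.
    by case: (xy (theta_letter theta x)) => // E; rewrite E eqxx in moved_x.
  apply: (free 0 3); apply: pseudo_cube_letters; rewrite ?size_mkseq // => u v.
  case: (xy u) (xy v) => -> [] ->; [left | right | right | left] => //.
  by rewrite -x_y thK.
have fixed z : theta_letter theta z = z.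
  case: (xy z) => -> //; case: (xy (theta_letter theta y)) => // E.
  by rewrite E -fixed_x -E thK.
pose h n := f n == x; pose g (b : bool) := if b then x else y.
have fgh n : f n = g (h n).
  by rewrite /g /h; case: eqP => // nx; case: (xy (f n)).
have [i [k [le_ik rev_cube]]] := binary_word_rev_cube (size_mkseq h 10).
apply: (free i k); apply: (rev_cubeb_pseudo_cube (theta_rev theta_inv fixed)).
have -> : factor f i k = map g (factor h i k).
  by rewrite -factor_comp; apply: eq_mkseq => j; apply: fgh.
apply: rev_cubeb_map; move: rev_cube.
by rewrite (_ : mkseq h 10 = factor h 0 10) // drop_factor take_factor //; lia.
Qed.

Lemma ternary_pseudo_cube_free (T : finType) theta : 2 < #|T| ->
  antimorphic_involution theta -> exists f : nat -> T, pseudo_cube_free_inf theta f.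
Proof.
move=> card_T theta_inv.
case: (boolP [exists x, theta_letter theta x != x])
  => [/existsP [a moved_a]|/existsPn fixed].
- have [c [ca c_theta_a]] := third_letter a (theta_letter theta a) card_T.
  pose g (b : bool) := if b then a else c.
  have g_inj : injective g.
    by case=> [] [] //= E; move: ca; rewrite E eqxx.
  exists (g \o thue_morse).
  apply: (overlap_free_pseudo_cube_free (P := mem [:: a; c])) => //.
  + exact: overlap_free_comp g_inj thue_morse_overlap_free.
  + by move=> n; rewrite /= /g; case: thue_morse; rewrite !inE eqxx ?orbT.
  + exact: theta_fixed_two_letters.
- have theta_rev := theta_rev theta_inv (fun x => eqP (negbNE (fixed x))).
  have [g g_inj] : exists g : option bool -> T, injective g.
    by apply: card_leq_injective; rewrite card_option card_bool.
  exists (g \o thue_morse_change); apply: square_free_pseudo_cube_free theta_rev _.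
  exact: square_free_comp g_inj thue_morse_change_square_free.
Qed.

Theorem mainTheorem2 (m : nat) (Sigma : finType) :
  1 <= m -> #|Sigma| = m ->
  (m <= 2 ->
     forall theta : seq Sigma -> seq Sigma, antimorphic_involution theta ->
       ~ exists f : nat -> Sigma, pseudo_cube_free_inf theta f) /\
  (3 <= m ->
     forall theta : seq Sigma -> seq Sigma, antimorphic_involution theta ->
       exists f : nat -> Sigma, pseudo_cube_free_inf theta f).
Proof.
move=> _ <-; split=> [card_T theta theta_inv [f free] | card_T theta theta_inv].
- exact: binary_not_pseudo_cube_free card_T theta_inv free.
- exact: ternary_pseudo_cube_free.
Qed.
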